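(* Let $\mu>1$ be a real number, $N\ge 1$ an integer, and $f:\mathbb{N}\to\mathbb{R}$ a non-negative, non-decreasing function with $\sum_{n=1}^\infty f(n)/n^2<\infty$. Let $a(1),a(2),\dots$ be a sequence of real numbers such that $$a(n+m)\le a(n)+a(m)+f(n+m)$$ holds for all integers $n,m$ with $N\le n\le m\le \mu n$. Then $\lim_{n\to\infty} a(n)/n$ exists (possibly $-\infty$). *)

From Stdlib Require Export Reals.
Open Scope R_scope.

Definition tends_to_minus_infty (u : nat -> R) : Prop :=
  forall M : R, exists K : nat, forall n : nat, (n >= K)%nat -> u n <= M.

Fixpoint partial_sum_f_over_sq (f : nat -> R) (K : nat) : R :=
  match K with
  | O => 0
  | S k => partial_sum_f_over_sq f k + f (S k) / (INR (S k))^2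
  end.

(* Let T(j) be eight times the tail sum_{k >= j} f(k)/k^2.  Since f is
   non-decreasing, f(k)/k <= T(k) - T(2k-1), so the shifted sequence
   c(n) = a(n)/n + T(2n-1) obeys, for every admissible pair n <= m,
     (n+m) (c(n+m) - T(n+m)) <= n (c(n) - T(2n-1)) + m (c(m) - T(2m-1)),
   i.e. c(n+m) is at most a weighted average of c(n) and c(m), up to
   tails that only decrease.  Splitting k into its two halves, a bound on c
   over a window [y, 2y] therefore propagates to all k >= y; in particular c
   is eventually bounded above and has a limit superior L < +oo.
   If L = -oo we are done.  Otherwise, suppose c(m) <= L - eps for some large
   m.  Adding to n a partner k <= mu n keeps at least the share
   n/(n+k) >= 1/(1+mu) of the defect L - c(n); repeating this 4q times, where
   (mu - 1) q >= 1, the defect reaches every integer of a whole window [y, 2y],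
   hence of [y, +oo), which contradicts lim sup c = L.  So c, and with it
   a(n)/n, converges to L. *)

From Stdlib Require Import Reals Arith Lra Lia Psatz Classical.
From Coquelicot Require Import Coquelicot.
Open Scope R_scope.

Local Notation psum := partial_sum_f_over_sq.

Lemma half_split k :
  (k = k / 2 + (k - k / 2) /\ k - k / 2 <= k / 2 + 1 /\ k / 2 <= k - k / 2)%nat.
Proof.
  pose proof (Nat.div_mod k 2 ltac:(lia)).
  pose proof (Nat.mod_upper_bound k 2 ltac:(lia)). lia.
Qed.

Lemma mul_div_bounds X q : (0 < q)%nat -> (q * (X / q) <= X < q * (X / q) + q)%nat.
Proof.
  intros. pose proof (Nat.div_mod X q ltac:(lia)).
  pose proof (Nat.mod_upper_bound X q ltac:(lia)). lia.
Qed.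

Lemma exists_INR_mul_ge1 c : 0 < c -> exists q, 1 <= c * INR q.
Proof.
  intros Hc. destruct (INR_unbounded (/ c)) as [q Hq]. exists q.
  apply Rlt_le. replace 1 with (c * / c) by (field; lra).
  apply Rmult_lt_compat_l; lra.
Qed.

Lemma bounded_above_initial_segment (u : nat -> R) n :
  exists B, forall j, (j <= n)%nat -> u j <= B.
Proof.
  induction n as [|n [B HB]].
  - exists (u O). intros j Hj. replace j with O by lia. lra.
  - exists (Rmax B (u (S n))). intros j Hj.
    destruct (Nat.eq_dec j (S n)) as [->|Hne]; [apply Rmax_r|].
    eapply Rle_trans; [apply HB; lia | apply Rmax_l].
Qed.

(* Right end of the range [2^t m, frontier q m t] of indices that a defect at m
   reaches after t additions (see [shifted_le_frontier]): a partner of n may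
   be as large as n + n/q, so the frontier gains the factor 1 + t/(4q)
   over 2^t m. *)
Fixpoint frontier (q m t : nat) : nat :=
  match t with O => m | S t => 2 * frontier q m t + frontier q m t / q end.

Lemma frontier_bounds q m t : (1 <= q)%nat -> (2 * q <= m)%nat ->
  (m <= 2 ^ t * m <= frontier q m t /\ 2 ^ t * m * (4 * q + t) <= 4 * q * frontier q m t)%nat.
Proof.
  intros Hq Hm.
  induction t as [|t [IH1 IH2]]; [simpl; nia|].
  simpl frontier. change (2 ^ S t)%nat with (2 * 2 ^ t)%nat.
  set (X := frontier q m t) in *. set (L := (2 ^ t * m)%nat) in *.
  destruct (mul_div_bounds X q ltac:(lia)) as [D1 D2].
  set (d := (X / q)%nat) in *.
  repeat split; nia.
Qed.

Section Tail.

Variables (f : nat -> R) (l : R).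
Hypothesis f_ge0 : forall n, (1 <= n)%nat -> 0 <= f n.
Hypothesis f_mono : forall n m, (1 <= n)%nat -> (n <= m)%nat -> f n <= f m.
Hypothesis psum_cv : Un_cv (psum f) l.

Lemma psum_le_le i j : (i <= j)%nat -> psum f i <= psum f j.
Proof.
  intros Hij. induction Hij as [|j _ IH]; [lra|].
  assert (0 <= f (S j) / INR (S j) ^ 2).
  { apply Rmult_le_pos; [apply f_ge0; lia|].
    apply Rlt_le, Rinv_0_lt_compat, pow_lt, lt_0_INR; lia. }
  cbn [partial_sum_f_over_sq]. lra.
Qed.

Lemma psum_le_lim n : psum f n <= l.
Proof. apply growing_ineq; [intro k; apply psum_le_le; lia | exact psum_cv]. Qed.

(* 8 * sum_{i >= j} f(i)/i^2; the factor 8 is what makes [f_div_le_tail_sub] hold. *)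
Definition tail (j : nat) : R := 8 * (l - psum f (pred j)).

Lemma tail_ge0 j : 0 <= tail j.
Proof. unfold tail. pose proof (psum_le_lim (pred j)). lra. Qed.

Lemma tail_le_le i j : (i <= j)%nat -> tail j <= tail i.
Proof. intros. unfold tail. pose proof (psum_le_le (pred i) (pred j) ltac:(lia)). lra. Qed.

Lemma tail_small eps : 0 < eps -> exists K, forall j, (K <= j)%nat -> tail j <= eps.
Proof.
  intros He. destruct (psum_cv (eps / 8)) as [K HK]; [lra|].
  exists (S K). intros j Hj. specialize (HK (pred j) ltac:(lia)).
  unfold R_dist in HK. apply Rabs_def2 in HK. unfold tail. lra.
Qed.

(* On the block of indices k .. 2k-1 every term f(i)/i^2 is at least f(k)/(2k)^2. *)
Lemma psum_block_ge k i : (1 <= k)%nat -> (i <= k)%nat ->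
  INR i * (f k / (4 * INR k ^ 2)) <= psum f (k - 1 + i) - psum f (k - 1).
Proof.
  intros Hk. induction i as [|i IH]; intros Hi.
  - rewrite Nat.add_0_r. simpl. lra.
  - replace (k - 1 + S i)%nat with (S (k - 1 + i)) by lia. cbn [partial_sum_f_over_sq].
    replace (S (k - 1 + i)) with (k + i)%nat by lia.
    specialize (IH ltac:(lia)).
    assert (Hk1 : 1 <= INR k) by (apply (le_INR 1); lia).
    assert (Hki : INR k <= INR (k + i) <= 2 * INR k).
    { rewrite plus_INR. apply le_INR in Hi. rewrite S_INR in Hi. pose proof (pos_INR i). lra. }
    assert (Hterm : f k / (4 * INR k ^ 2) <= f (k + i)%nat / INR (k + i) ^ 2).
    { unfold Rdiv. apply Rmult_le_compat.
      - apply f_ge0; lia.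
      - apply Rlt_le, Rinv_0_lt_compat. nra.
      - apply f_mono; lia.
      - apply Rinv_le_contravar; nra. }
    rewrite S_INR. lra.
Qed.

Lemma f_div_le_tail_sub k : (2 <= k)%nat -> f k / INR k <= tail k - tail (2 * k - 1).
Proof.
  intros Hk. pose proof (psum_block_ge k (k - 1) ltac:(lia) ltac:(lia)) as Hblock.
  unfold tail. replace (pred (2 * k - 1)) with (k - 1 + (k - 1))%nat by lia.
  replace (pred k) with (k - 1)%nat by lia.
  rewrite minus_INR in Hblock by lia. simpl INR in Hblock.
  assert (Hk2 : 2 <= INR k) by (apply (le_INR 2); lia).
  assert (Hfk : 0 <= f k) by (apply f_ge0; lia).
  assert (Hrest : 0 <= f k * (INR k - 2) / INR k ^ 2).
  { apply Rmult_le_pos; [nra|]. apply Rlt_le, Rinv_0_lt_compat. nra. }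
  replace (f k / INR k) with
    (8 * ((INR k - 1) * (f k / (4 * INR k ^ 2))) - f k * (INR k - 2) / INR k ^ 2)
    by (field; lra).
  lra.
Qed.

End Tail.

Section Shifted.

Variables (mu : R) (N : nat) (f a : nat -> R) (l : R) (q : nat).
Hypothesis mu_gt1 : 1 < mu.
Hypothesis N_ge1 : (1 <= N)%nat.
Hypothesis f_ge0 : forall n, (1 <= n)%nat -> 0 <= f n.
Hypothesis f_mono : forall n m, (1 <= n)%nat -> (n <= m)%nat -> f n <= f m.
Hypothesis psum_cv : Un_cv (psum f) l.
Hypothesis a_subadd : forall n m, (N <= n)%nat -> (n <= m)%nat -> INR m <= mu * INR n ->
  a (n + m)%nat <= a n + a m + f (n + m)%nat.
Hypothesis q_large : 1 <= (mu - 1) * INR q.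

Local Notation T := (tail f l).

Definition shifted (n : nat) : R := a n / INR n + T (2 * n - 1).

Lemma mu_sub1_mul_ge1 y : (q <= y)%nat -> 1 <= (mu - 1) * INR y.
Proof. intros Hy. apply le_INR in Hy. pose proof (pos_INR q). nra. Qed.

Lemma q_ge1 : (1 <= q)%nat.
Proof.
  destruct q; [|lia]. exfalso. simpl INR in q_large. lra.
Qed.

Lemma INR_le_mu_mul_of_le_succ p r : (q <= p)%nat -> (r <= p + 1)%nat -> INR r <= mu * INR p.
Proof.
  intros Hp Hr. pose proof (mu_sub1_mul_ge1 p Hp).
  apply le_INR in Hr. rewrite plus_INR in Hr. simpl INR in Hr. lra.
Qed.

Lemma INR_mul_shifted n : (1 <= n)%nat -> INR n * (shifted n - T (2 * n - 1)) = a n.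
Proof. intros. unfold shifted. assert (0 < INR n) by (apply lt_0_INR; lia). field. lra. Qed.

Lemma shifted_add_le n m : (N <= n)%nat -> (n <= m)%nat -> INR m <= mu * INR n ->
  INR (n + m) * (shifted (n + m) - T (n + m))
  <= INR n * (shifted n - T (2 * n - 1)) + INR m * (shifted m - T (2 * m - 1)).
Proof.
  intros Hn Hnm Hmu.
  rewrite !INR_mul_shifted by lia.
  pose proof (a_subadd n m Hn Hnm Hmu).
  assert (Hs : 0 < INR (n + m)) by (apply lt_0_INR; lia).
  assert (Hdrop : f (n + m)%nat <= INR (n + m) * (T (n + m) - T (2 * (n + m) - 1))).
  { pose proof (f_div_le_tail_sub f l f_ge0 f_mono (n + m) ltac:(lia)) as Hf.
    apply Rmult_le_compat_l with (r := INR (n + m)) in Hf; [|lra].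
    replace (INR (n + m) * (f (n + m)%nat / INR (n + m))) with (f (n + m)%nat) in Hf
      by (field; lra).
    exact Hf. }
  unfold shifted.
  replace (INR (n + m) * (a (n + m)%nat / INR (n + m) + T (2 * (n + m) - 1) - T (n + m)))
    with (a (n + m)%nat - INR (n + m) * (T (n + m) - T (2 * (n + m) - 1))) by (field; lra).
  lra.
Qed.

Lemma shifted_add_le_max p r : (N <= p)%nat -> (q <= p)%nat -> (p <= r)%nat -> (r <= p + 1)%nat ->
  shifted (p + r) <= Rmax (shifted p) (shifted r).
Proof.
  intros Hp Hqp Hpr Hr.
  pose proof (shifted_add_le p r Hp Hpr (INR_le_mu_mul_of_le_succ p r Hqp Hr)) as Hadd.
  pose proof (Rmax_l (shifted p) (shifted r)). pose proof (Rmax_r (shifted p) (shifted r)).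
  assert (T (p + r) <= T (2 * p - 1)) by (apply tail_le_le; auto; lia).
  assert (T (p + r) <= T (2 * r - 1)) by (apply tail_le_le; auto; lia).
  assert (0 < INR p) by (apply lt_0_INR; lia).
  assert (0 < INR r) by (apply lt_0_INR; lia).
  rewrite plus_INR in Hadd. nra.
Qed.

Lemma shifted_le_of_window y B : (N <= y)%nat -> (q <= y)%nat ->
  (forall j, (y <= j <= 2 * y)%nat -> shifted j <= B) ->
  forall k, (y <= k)%nat -> shifted k <= B.
Proof.
  intros HNy Hqy Hwin k. induction k as [k IH] using lt_wf_ind. intros Hyk.
  destruct (Compare_dec.le_lt_dec k (2 * y)) as [Hk|Hk]; [apply Hwin; lia|].
  destruct (half_split k) as [Ek [Hhi Hlo]].
  rewrite Ek. eapply Rle_trans; [apply shifted_add_le_max; lia|].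
  apply Rmax_lub; apply IH; lia.
Qed.

Lemma shifted_bounded_above : exists y B, forall k, (y <= k)%nat -> shifted k <= B.
Proof.
  destruct (bounded_above_initial_segment shifted (2 * (N + q))) as [B HB].
  exists (N + q)%nat, B. apply shifted_le_of_window; try lia.
  intros j Hj. apply HB. lia.
Qed.

Section Dip.

Variables (H : R) (m : nat).
Hypothesis N_le_m : (N <= m)%nat.
Hypothesis q_le_m : (2 * q <= m)%nat.
Hypothesis shifted_le_H : forall j, (m <= j)%nat -> shifted j <= H.

(* G may be negative; then the bound follows from [shifted_le_H] alone. *)
Lemma shifted_add_le_defect n k G : (m <= n)%nat -> (n <= k)%nat -> INR k <= mu * INR n ->
  shifted n <= H - G -> shifted (n + k) <= H - G / (1 + mu) + T m.
Proof.
  intros Hmn Hnk Hmu HG.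
  pose proof (shifted_add_le n k ltac:(lia) Hnk Hmu) as Hadd.
  assert (T (n + k) <= T m) by (apply tail_le_le; auto; lia).
  pose proof (tail_ge0 f l f_ge0 psum_cv (2 * n - 1)).
  pose proof (tail_ge0 f l f_ge0 psum_cv (2 * k - 1)).
  pose proof (shifted_le_H n Hmn). pose proof (shifted_le_H k ltac:(lia)).
  assert (Pn : 0 < INR n) by (apply lt_0_INR; lia).
  assert (Pk : 0 < INR k) by (apply lt_0_INR; lia).
  rewrite plus_INR in Hadd.
  set (s := INR n + INR k) in *.
  assert (Hshare : s / (1 + mu) <= INR n).
  { apply (Rmult_le_reg_r (1 + mu)); [lra|]. unfold s. field_simplify; lra. }
  assert (Hshare0 : 0 <= s / (1 + mu)).
  { apply Rmult_le_pos; [unfold s; lra | apply Rlt_le, Rinv_0_lt_compat; lra]. }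
  assert (Hkey : s / (1 + mu) * G <= INR n * (H - shifted n)).
  { destruct (Rle_lt_dec G 0); nra. }
  assert (Hsum : s * (shifted (n + k) - T (n + k)) <= s * (H - G / (1 + mu))).
  { replace (s * (H - G / (1 + mu))) with (s * H - s / (1 + mu) * G) by (field; lra).
    assert (0 <= INR n * T (2 * n - 1)) by (apply Rmult_le_pos; lra).
    assert (0 <= INR k * T (2 * k - 1)) by (apply Rmult_le_pos; lra).
    assert (INR k * shifted k <= INR k * H) by (apply Rmult_le_compat_l; lra).
    replace (s * H) with (INR n * H + INR k * H) by (unfold s; ring).
    lra. }
  assert (shifted (n + k) - T (n + k) <= H - G / (1 + mu)).
  { apply (Rmult_le_reg_l s); [unfold s; lra | exact Hsum]. }
  lra.
Qed.

Lemma shifted_add_le_defect_pow t n k : (m <= n)%nat -> (n <= k)%nat -> INR k <= mu * INR n ->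
  shifted n <= H - (H - shifted m) / (1 + mu) ^ t + INR t * T m ->
  shifted (n + k) <= H - (H - shifted m) / (1 + mu) ^ S t + INR (S t) * T m.
Proof.
  intros Hmn Hnk Hmu Hn.
  pose proof (tail_ge0 f l f_ge0 psum_cv m) as Tm.
  assert (HP : 0 < (1 + mu) ^ t) by (apply pow_lt; lra).
  eapply Rle_trans.
  { apply (shifted_add_le_defect n k ((H - shifted m) / (1 + mu) ^ t - INR t * T m));
      [assumption.. |].
    eapply Rle_trans; [exact Hn | right; ring]. }
  assert (Hshrink : INR t * T m / (1 + mu) <= INR t * T m).
  { assert (0 <= INR t * T m) by (apply Rmult_le_pos; [apply pos_INR | exact Tm]).
    unfold Rdiv. rewrite <- (Rmult_1_r (INR t * T m)) at 2.
    apply Rmult_le_compat_l; [assumption|].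
    rewrite <- Rinv_1. apply Rinv_le_contravar; lra. }
  rewrite S_INR. simpl pow.
  replace ((H - shifted m) / ((1 + mu) * (1 + mu) ^ t))
    with ((H - shifted m) / (1 + mu) ^ t / (1 + mu)) by (field; lra).
  unfold Rdiv in *. lra.
Qed.

Lemma shifted_le_frontier t n : (2 ^ t * m <= n <= frontier q m t)%nat ->
  shifted n <= H - (H - shifted m) / (1 + mu) ^ t + INR t * T m.
Proof.
  pose proof q_ge1.
  revert n. induction t as [|t IH]; intros n Hn.
  - simpl in Hn. replace n with m by lia. simpl. lra.
  - destruct (frontier_bounds q m t q_ge1 q_le_m) as [[G1 G2] G3].
    rewrite Nat.pow_succ_r', <- Nat.mul_assoc in Hn. simpl frontier in Hn.
    set (X := frontier q m t) in *. set (L := (2 ^ t * m)%nat) in *.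
    destruct (half_split n) as [E [E1 E2]].
    destruct (Compare_dec.le_lt_dec (n / 2) X) as [Hp|Hp].
    + rewrite E. apply shifted_add_le_defect_pow; try lia.
      * apply INR_le_mu_mul_of_le_succ; lia.
      * apply IH; lia.
    + replace n with (X + (n - X))%nat by lia.
      apply shifted_add_le_defect_pow; try lia; [|apply IH; lia].
      destruct (mul_div_bounds X q ltac:(lia)) as [D1 D2].
      assert (Hk : (n - X <= X + X / q)%nat) by lia.
      apply le_INR in Hk. rewrite plus_INR in Hk.
      apply le_INR in D1. rewrite mult_INR in D1.
      pose proof (pos_INR (X / q)). nra.
Qed.

Lemma shifted_le_after_dip : exists y, (m <= y)%nat /\ forall k, (y <= k)%nat ->
  shifted k <= H - (H - shifted m) / (1 + mu) ^ (4 * q) + INR (4 * q) * T m.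
Proof.
  pose proof q_ge1.
  destruct (frontier_bounds q m (4 * q) q_ge1 q_le_m) as [[G1 G2] G3].
  exists (2 ^ (4 * q) * m)%nat. split; [lia|].
  apply shifted_le_of_window; try lia.
  intros j Hj. apply shifted_le_frontier. nia.
Qed.

End Dip.

Lemma shifted_eventually_gt_LimSup Lam : is_LimSup_seq shifted (Finite Lam) ->
  forall eps, 0 < eps -> exists K, forall n, (K <= n)%nat -> Lam - eps < shifted n.
Proof.
  intros HL eps He. apply NNPP. intros Hnot.
  assert (Hdip : forall K, exists n, (K <= n)%nat /\ shifted n <= Lam - eps).
  { intros K. apply NNPP. intros Hno. apply Hnot. exists K. intros n Hn.
    apply Rnot_le_lt. intros Hle. apply Hno. exists n. auto. }
  (* A dip c(m) <= Lam - eps past the point where c < Lam + eta pushes c below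
     Lam - rho/2 on a whole tail, although c exceeds Lam - rho/2 infinitely often. *)
  set (P := (1 + mu) ^ (4 * q)).
  assert (HP : 0 < P) by (apply pow_lt; lra).
  set (rho := eps / P).
  assert (Hrho : 0 < rho) by (apply Rdiv_lt_0_compat; lra).
  set (eta := rho / (2 * (1 + INR (4 * q)))).
  pose proof (pos_INR (4 * q)) as Hq4.
  assert (Heta : 0 < eta) by (apply Rdiv_lt_0_compat; lra).
  destruct (HL (mkposreal eta Heta)) as [_ [K1 HK1]]. simpl in HK1.
  destruct (tail_small f l psum_cv eta Heta) as [K2 HK2].
  destruct (Hdip (K1 + K2 + N + 2 * q)%nat) as [m [Hm Hdipm]].
  destruct (shifted_le_after_dip (Lam + eta) m) as [y [Hmy Hy]]; try lia.
  { intros j Hj. apply Rlt_le, HK1. lia. }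
  destruct (HL (mkposreal (rho / 2) ltac:(lra))) as [Hfreq _]. simpl in Hfreq.
  destruct (Hfreq y) as [n [Hyn Hn]].
  pose proof (Hy n Hyn) as Hbound. fold P in Hbound.
  assert (Tm : T m <= eta) by (apply HK2; lia).
  assert (rho <= (Lam + eta - shifted m) / P).
  { apply Rmult_le_compat_r; [apply Rlt_le, Rinv_0_lt_compat; lra | lra]. }
  assert (INR (4 * q) * T m <= INR (4 * q) * eta) by (apply Rmult_le_compat_l; auto).
  assert (eta + INR (4 * q) * eta = rho / 2) by (unfold eta; field; lra).
  lra.
Qed.

Lemma ratio_cv_of_LimSup Lam : is_LimSup_seq shifted (Finite Lam) ->
  Un_cv (fun n => a n / INR n) Lam.
Proof.
  intros HL eps He.
  destruct (shifted_eventually_gt_LimSup Lam HL (eps / 2) ltac:(lra)) as [K1 HK1].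
  destruct (HL (mkposreal (eps / 2) ltac:(lra))) as [_ [K2 HK2]]. simpl in HK2.
  destruct (tail_small f l psum_cv (eps / 2) ltac:(lra)) as [K3 HK3].
  exists (K1 + K2 + K3 + 1)%nat. intros n Hn.
  specialize (HK1 n ltac:(lia)). specialize (HK2 n ltac:(lia)).
  specialize (HK3 (2 * n - 1)%nat ltac:(lia)).
  pose proof (tail_ge0 f l f_ge0 psum_cv (2 * n - 1)).
  unfold shifted in HK1, HK2. unfold R_dist. apply Rabs_def1; lra.
Qed.

Lemma ratio_to_minus_infty_of_LimSup : is_LimSup_seq shifted m_infty ->
  tends_to_minus_infty (fun n => a n / INR n).
Proof.
  intros HL M. destruct (HL M) as [K HK]. exists K. intros n Hn.
  specialize (HK n Hn). pose proof (tail_ge0 f l f_ge0 psum_cv (2 * n - 1)).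
  unfold shifted in HK. lra.
Qed.

End Shifted.

Theorem theorem4p4 (mu : R) (N : nat) (f : nat -> R) (a : nat -> R)
  (hmu : 1 < mu) (hN : (1 <= N)%nat)
  (hf_nonneg : forall n : nat, (1 <= n)%nat -> 0 <= f n)
  (hf_mono : forall n m : nat, (1 <= n)%nat -> (n <= m)%nat -> f n <= f m)
  (hf_sum : exists l : R, Un_cv (partial_sum_f_over_sq f) l)
  (ha : forall n m : nat, (N <= n)%nat -> (n <= m)%nat -> INR m <= mu * INR n ->
        a (n + m)%nat <= a n + a m + f (n + m)%nat) :
  (exists L : R, Un_cv (fun n => a n / INR n) L)
  \/ tends_to_minus_infty (fun n => a n / INR n).
Proof.
  destruct hf_sum as [l hl].
  destruct (exists_INR_mul_ge1 (mu - 1)) as [q hq]; [lra|].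
  destruct (ex_LimSup_seq (shifted f a l)) as [[Lam| |] HL]; simpl in HL.
  - left. exists Lam. exact (ratio_cv_of_LimSup mu N f a l q hmu hN hf_nonneg hf_mono hl ha hq Lam HL).
  - exfalso.
    destruct (shifted_bounded_above mu N f a l q hmu hN hf_nonneg hf_mono ha hq) as [y [B HB]].
    destruct (HL B y) as [n [Hn HBn]]. specialize (HB n Hn). lra.
  - right. exact (ratio_to_minus_infty_of_LimSup f a l hf_nonneg hl HL).
Qed.
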